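(* For all integers $f,n\ge0$ with $(f,n)\neq(0,0)$, one has $T_{0,0}(q)=1$ and $$T_{f,n}(q)=T_{f,n-1}(q)+\{n+1\}\,T_{f-1,n+1}(q),$$ where $T_{f,n}(q)$ is interpreted as $0$ if $f$ or $n$ is negative.
   Context: For $f,n\ge0$, a chord diagram with $f$ free chords and $n$ tethered chords is described combinatorially as follows: take $2f+n$ points on a circle labelled $1,2,\dots,2f+n$ in clockwise order starting after a fixed basepoint; choose an $n$-element subset of these points (the endpoints of the tethered chords, each joined by a chord to the basepoint) and a perfect matching of the remaining $2f$ points into $f$ free chords. The number of crossings of such a diagram is the number of pairs of free chords $\{a<b\},\{c<d\}$ with $a<c<b<d$, plus the number of pairs (tethered endpoint $p$, free chord $\{a<b\}$) with $a<p<b$. Let $N(f,n,c)$ be the number of such diagrams with $c$ crossings and $T_{f,n}(q):=\sum_cN(f,n,c)q^c\in\mathbb N[q]$. Also $\{m\}:=1+q+\cdots+q^{m-1}$ is the classical $q$-integer. *)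

From HB Require Import structures.
From mathcomp Require Import all_boot all_order all_algebra.
Set Implicit Arguments. Unset Strict Implicit. Unset Printing Implicit Defensive.
Import GRing.Theory.
Local Open Scope ring_scope.

(* A chord diagram with f free chords and n tethered chords on the points
   0, 1, ..., 2f+n-1 (standing for 1, ..., 2f+n, in clockwise order after
   the basepoint) is encoded by an involution p of 'I_(2f+n) with exactly n
   fixed points: the fixed points are the tethered endpoints, and the
   2-cycles {a, p a} are the free chords.  This is in bijection with the
   data (n-subset, perfect matching of its complement). *)
Definition diagram_pts (f n : nat) := (2 * f + n)%N.

Definition is_diagram (f n : nat) (p : {ffun 'I_(diagram_pts f n) -> 'I_(diagram_pts f n)}) : bool := 
  [forall x, p (p x) == x] && (#|[set x | p x == x]| == n).

(* crossings of two free chords {a < b}, {c < d} with a < c < b < d: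
   counted once via the pair (a, c) *)
Arguments is_diagram : clear implicits.

Definition free_crossings (N : nat) (p : {ffun 'I_N -> 'I_N}) : nat :=
  #|[set ac : 'I_N * 'I_N | (ac.1 < ac.2)%N && (ac.2 < p ac.1)%N && (p ac.1 < p ac.2)%N]|.

(* crossings of a tethered endpoint t (fixed point) with a free chord {a < b},
   a < t < b: counted via the pair (t, a) *)
Definition teth_crossings (N : nat) (p : {ffun 'I_N -> 'I_N}) : nat :=
  #|[set ta : 'I_N * 'I_N | (p ta.1 == ta.1) && (ta.2 < ta.1)%N && (ta.1 < p ta.2)%N]|.

Definition crossings (N : nat) (p : {ffun 'I_N -> 'I_N}) : nat :=
  (free_crossings p + teth_crossings p)%N.

Definition Ncount (f n c : nat) : nat :=
  #|[set p | is_diagram f n p & crossings p == c]|.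

(* Every diagram on N points has at most 2*N^2 crossings (each kind of
   crossing is counted by a subset of 'I_N * 'I_N), so c ranges over
   0 .. 2*N^2 without loss. *)
Definition T (f n : nat) : {poly int} :=
  \sum_(c < (2 * (diagram_pts f n) ^ 2).+1) (Ncount f n c)%:R *: 'X^c.

Definition qint (m : nat) : {poly int} := \sum_(i < m) 'X^i.

From HB Require Import structures.
From mathcomp Require Import all_boot all_order all_algebra.
From mathcomp Require Import zify.
Import GRing.Theory.
Set Implicit Arguments. Unset Strict Implicit. Unset Printing Implicit Defensive.

(* Write G(N, n) for the crossing polynomial of the involutions of 'I_N with
   n fixed points, so that T f n = G(2f + n, n), and classify the diagrams on
   M + 1 points by the partner b of the last point M.  If M is tethered it
   crosses nothing, and deleting it leaves a diagram counted by G(M, n - 1).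
   Otherwise cut the free chord {b, M} back to a tethered endpoint at b: the
   free chords crossed by {b, M} are exactly those crossed by the tethered b,
   and in addition {b, M} crosses the tethered points t > b.  Hence each
   diagram counted by G(M, n + 1) arises once for each of its n + 1 tethered
   points b, weighted by q^(number of tethered points above b), and these
   weights sum to {n + 1}. *)

Ltac case_lia :=
  repeat (match goal with
          | |- context [if ?x == ?y then _ else _] => case: (eqVneq x y) => ?
          | |- context [?x == ?y] => case: (eqVneq x y) => ?
          | |- context [leq ?x ?y] => case: (leqP x y) => ?
          end; subst => /=; try (intros; exfalso; lia));
  intros; try lia.

Lemma sum_ord_square_recr M (F : nat -> nat -> nat) :
  \sum_(a < M.+1) \sum_(c < M.+1) F a c =
  \sum_(a < M) \sum_(c < M) F a c + \sum_(a < M) F a M + \sum_(c < M.+1) F M c.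
Proof.
rewrite big_ord_recr /= -big_split /=; congr (_ + _).
by apply: eq_bigr => a _; rewrite big_ord_recr.
Qed.

Lemma sum_ord_eq_andb N (x : nat) (B : bool) :
  \sum_(c < N) ((c == x :> nat) && B) = (x < N) && B.
Proof.
elim: N => [|N IHN]; first by rewrite big_ord0.
by rewrite big_ord_recr /= IHN ltnS; case_lia.
Qed.

Section NatView.
Variable N : nat.
Implicit Type p : {ffun 'I_N -> 'I_N}.

Definition natfun p (i : nat) : nat :=
  if insub i is Some x then val (p x) else i.

Lemma natfunE p (x : 'I_N) : natfun p x = p x.
Proof. by rewrite /natfun valK. Qed.

Lemma natfun_ord p i (lt_iN : i < N) : natfun p i = p (Ordinal lt_iN).
Proof. by rewrite -natfunE. Qed.

Lemma natfun_lt p i : i < N -> natfun p i < N.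
Proof. by move=> lt_iN; rewrite (natfun_ord _ lt_iN). Qed.

Lemma natfun_inj p1 p2 :
  (forall i, i < N -> natfun p1 i = natfun p2 i) -> p1 = p2.
Proof. by move=> eq12; apply/ffunP => x; apply: val_inj; rewrite /= -!natfunE eq12. Qed.

Lemma involutiveP p :
  reflect (forall i, i < N -> natfun p (natfun p i) = i) [forall x, p (p x) == x].
Proof.
apply: (iffP forallP) => [pK i lt_iN | pK x].
  by rewrite (natfun_ord _ lt_iN) natfunE (eqP (pK (Ordinal lt_iN))).
by apply/eqP/val_inj; rewrite /= -!natfunE pK.
Qed.

Lemma card_fixpts p : #|[set x | p x == x]| = \sum_(i < N) (natfun p i == i).
Proof.
rewrite -sum1_card big_mkcond /=; apply: eq_bigr => i _.
by rewrite inE natfunE val_eqE; case: (p i == i).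
Qed.

End NatView.

Definition free_crossn (N : nat) (g : nat -> nat) : nat :=
  \sum_(a < N) \sum_(c < N) ((a < c) && (c < g a) && (g a < g c)).

Definition teth_crossn (N : nat) (g : nat -> nat) : nat :=
  \sum_(t < N) \sum_(a < N) ((g t == t) && (a < t) && (t < g a)).

Definition chords_around (N : nat) (g : nat -> nat) (b : nat) : nat :=
  \sum_(a < N) ((a < b) && (b < g a)).

Definition fixed_above N (g : nat -> nat) (b : nat) : nat :=
  \sum_(t < N) ((g t == t) && (b < t)).

Definition involution_fix N n (p : {ffun 'I_N -> 'I_N}) : bool :=
  [forall x, p (p x) == x] && (#|[set x | p x == x]| == n).

Lemma crossingsE N (p : {ffun 'I_N -> 'I_N}) :
  crossings p = free_crossn N (natfun p) + teth_crossn N (natfun p).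
Proof.
rewrite /crossings /free_crossings /teth_crossings /free_crossn /teth_crossn.
by congr (_ + _); rewrite pair_big -sum1_card big_mkcond /=;
  apply: eq_bigr => -[a c] _; rewrite inE /= !natfunE ?val_eqE; case: ifP.
Qed.

(* [r] arises from [g] by joining the tethered point [b] to a new last point
   [M] by a free chord; [b = M] encodes adding [M] as a new tethered point. *)
Section JoinLast.
Variables (M b : nat) (g r : nat -> nat).
Hypothesis le_bM : b <= M.
Hypothesis g_lt : forall i, i < M -> g i < M.
Hypothesis g_fix_b : b < M -> g b = b.
Hypothesis rE : forall i, i < M.+1 -> r i = if i == M then b else if i == b then M else g i.

Lemma rE_lt i : i < M -> r i = if i == b then M else g i.
Proof. by move=> lt_iM; rewrite rE ?(ltn_eqF lt_iM) // ltnW. Qed.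

Lemma r_le i : i < M.+1 -> r i <= M.
Proof. by move=> lt_iM1; rewrite rE //; have := @g_lt i; case_lia. Qed.

Lemma sum_eqb_around a : a < M ->
  \sum_(c < M) ((c == b :> nat) && ((a < b) && (b < g a))) = (a < b) && (b < g a).
Proof. by move=> lt_aM; rewrite sum_ord_eq_andb; have := g_lt lt_aM; case_lia. Qed.

Lemma sum_eqb_fixed_above t : t < M ->
  \sum_(a < M) ((a == b :> nat) && ((g t == t) && (b < t))) = (g t == t) && (b < t).
Proof. by move=> lt_tM; rewrite sum_ord_eq_andb; case_lia. Qed.

Lemma free_crossn_join : free_crossn M.+1 r = free_crossn M g + chords_around M g b.
Proof.
rewrite /free_crossn
  (@sum_ord_square_recr _ (fun a c => ((a < c) && (c < r a) && (r a < r c) : nat))).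
rewrite [X in _ + X + _ = _]big1 => [|a _]; last by have := r_le (ltnW (ltn_ord a)); case_lia.
rewrite [X in _ + X = _]big1 => [|c _]; last by have := ltn_ord c; case_lia.
rewrite !addn0 /chords_around -big_split; apply: eq_bigr => a _.
rewrite -sum_eqb_around // -big_split; apply: eq_bigr => c _ /=.
by rewrite !rE_lt //; have := g_lt (ltn_ord a); have := g_lt (ltn_ord c); case_lia.
Qed.

Lemma teth_crossn_join :
  teth_crossn M.+1 r + chords_around M g b =
  teth_crossn M g + fixed_above M g b.
Proof.
rewrite /teth_crossn
  (@sum_ord_square_recr _ (fun t a => ((r t == t) && (a < t) && (t < r a) : nat))).
rewrite [X in _ + X + _ + _ = _]big1 => [|t _]; last by have := ltn_ord t; case_lia.
rewrite [X in _ + X + _ = _]big1 => [|a _]; last by have := r_le (ltn_ord a); case_lia.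
rewrite !addn0 /chords_around /fixed_above.
under [X in _ + X]eq_bigr => a _ do rewrite -sum_eqb_around //.
under [X in _ = _ + X]eq_bigr => t _ do rewrite -sum_eqb_fixed_above //.
rewrite [X in _ + X]exchange_big -!big_split; apply: eq_bigr => t _.
rewrite -!big_split; apply: eq_bigr => a _ /=.
by rewrite !rE_lt //; have := g_lt (ltn_ord a); have := g_lt (ltn_ord t); case_lia.
Qed.

Lemma fixpts_join :
  \sum_(i < M.+1) (r i == i) + (b < M) = \sum_(i < M) (g i == i) + (b == M).
Proof.
rewrite big_ord_recr /= rE // eqxx -(andbT (b < M)) -sum_ord_eq_andb.
rewrite addnAC -big_split /=; congr (_ + _); apply: eq_bigr => i _.
by rewrite rE_lt //; have := ltn_ord i; have := g_lt (ltn_ord i); case_lia.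
Qed.

Lemma involutive_join :
  (forall i, i < M.+1 -> r (r i) = i) <-> (forall i, i < M -> g (g i) = i).
Proof.
split=> [rK i lt_iM | gK i lt_iM1].
  case: (eqVneq i b) => [eq_ib|ne_ib]; first by rewrite eq_ib !g_fix_b // -eq_ib.
  have := rK i (ltnW lt_iM); rewrite (rE_lt lt_iM) (negbTE ne_ib) (rE_lt (g_lt lt_iM)).
  by case: eqVneq => // _ eq_Mi; move: lt_iM; rewrite -eq_Mi ltnn.
rewrite (rE lt_iM1); case: (eqVneq i M) => [->|ne_iM]; first by rewrite rE //; case_lia.
case: (eqVneq i b) => [->|ne_ib]; first by rewrite rE // eqxx.
have lt_iM : i < M by lia.
rewrite rE_lt ?g_lt //; case: eqVneq => [eq_gib|_]; last exact: gK.
by move: ne_ib; rewrite -(gK i lt_iM) eq_gib g_fix_b ?eqxx // -eq_gib g_lt.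
Qed.

End JoinLast.

Section LastPoint.
Variable M : nat.
Implicit Types (p : {ffun 'I_M.+1 -> 'I_M.+1}) (q : {ffun 'I_M -> 'I_M}) (b : 'I_M.+1).

Definition join_last b q : {ffun 'I_M.+1 -> 'I_M.+1} :=
  [ffun i : 'I_M.+1 =>
     inord (if i == M :> nat then val b else if i == b :> nat then M else natfun q i)].

Definition cut_last p : {ffun 'I_M -> 'I_M} :=
  [ffun j : 'I_M => odflt j (insub (natfun p j))].

Lemma natfun_join_last b q i : i < M.+1 ->
  natfun (join_last b q) i = if i == M then val b else if i == b then M else natfun q i.
Proof.
move=> lt_iM1; rewrite (natfun_ord _ lt_iM1) ffunE inordK //=.
by have := ltn_ord b; have := @natfun_lt _ q i; case_lia.
Qed.

Lemma natfun_cut_last p j : j < M ->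
  natfun (cut_last p) j = if natfun p j < M then natfun p j else j.
Proof.
move=> lt_jM; rewrite (natfun_ord _ lt_jM) ffunE.
by case: insubP => [y -> /= ->|/negbTE ->].
Qed.

Lemma join_last_max b q : join_last b q ord_max = b.
Proof. by apply: ord_inj; rewrite -natfunE natfun_join_last /= ?eqxx. Qed.

Lemma cut_lastK p : [forall x, p (p x) == x] -> join_last (p ord_max) (cut_last p) = p.
Proof.
move/involutiveP => pK; apply: natfun_inj => i lt_iM1.
have pM : natfun p M = p ord_max by rewrite -natfunE.
rewrite natfun_join_last //; case: (eqVneq i M) => [->|ne_iM]; first by rewrite pM.
case: (eqVneq i (p ord_max)) => [->|ne_ib]; first by rewrite -pM pK.
rewrite natfun_cut_last; last by lia.
case: ltnP => // le_Mpi; have eq_piM : natfun p i = M by have := natfun_lt p lt_iM1; lia.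
by have := pK i lt_iM1; rewrite eq_piM pM => eq_bi; rewrite -eq_bi eqxx in ne_ib.
Qed.

Lemma cut_join_last b q :
  (cut_last (join_last b q) == q) = (b == M :> nat) || (natfun q b == b).
Proof.
apply/eqP/idP => [<-|q_fix_b].
  have [lt_bM|le_Mb] := ltnP b M; last by rewrite eqn_leq le_Mb -ltnS ltn_ord.
  rewrite natfun_cut_last // natfun_join_last ?ltn_ord //.
  by rewrite (ltn_eqF lt_bM) eqxx ltnn eqxx orbT.
apply: natfun_inj => j lt_jM; rewrite natfun_cut_last // natfun_join_last //; last lia.
by have := natfun_lt q lt_jM; move: q_fix_b; case_lia.
Qed.

Section JoinLastTransfer.
Variables (b : 'I_M.+1) (q : {ffun 'I_M -> 'I_M}).
Hypothesis q_fix_b : (b == M :> nat) || (natfun q b == b).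

Let le_bM : b <= M. Proof. by rewrite -ltnS. Qed.
Let q_lt : forall i, i < M -> natfun q i < M. Proof. exact: natfun_lt. Qed.
Let q_fix_b_lt : b < M -> natfun q b = b.
Proof. by move: q_fix_b; case_lia. Qed.
Let join_lastE := natfun_join_last b q.

Lemma involution_fix_join_last n :
  involution_fix n (join_last b q) =
  [forall x, q (q x) == x] && (#|[set x | q x == x]| + (b == M :> nat) == n + (b < M)).
Proof.
rewrite /involution_fix !card_fixpts.
have -> : [forall x, join_last b q (join_last b q x) == x] = [forall x, q (q x) == x].
  have invE := involutive_join le_bM q_lt q_fix_b_lt join_lastE.
  by apply/involutiveP/involutiveP => /invE.
rewrite -(fixpts_join le_bM q_lt q_fix_b_lt join_lastE).
by congr (_ && _); rewrite eqn_add2r.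
Qed.

Lemma crossings_join_last :
  crossings (join_last b q) = crossings q + fixed_above M (natfun q) b.
Proof.
rewrite !crossingsE (free_crossn_join le_bM q_lt q_fix_b_lt join_lastE).
have := teth_crossn_join le_bM q_lt q_fix_b_lt join_lastE.
lia.
Qed.

End JoinLastTransfer.
End LastPoint.

Local Open Scope ring_scope.

Lemma qintSl m : qint m.+1 = 1 + 'X * qint m.
Proof.
rewrite /qint big_ord_recl mulr_sumr; congr (_ + _).
by apply: eq_bigr => i _; rewrite exprS.
Qed.

Lemma sum_X_count_above (f : nat -> bool) N :
  \sum_(b < N | f b) ('X^(\sum_(t < N) (f t && (b < t)))%N : {poly int}) =
  qint (\sum_(t < N) f t)%N.
Proof.
elim: N => [|N IHN]; first by rewrite !big_ord0 /qint big_ord0.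
have above_N (b : 'I_N) :
    (\sum_(t < N.+1) (f t && (b < t)) = \sum_(t < N) (f t && (b < t)) + f N)%N.
  by rewrite big_ord_recr /= ltn_ord andbT.
have none_above_N : (\sum_(t < N.+1) (f t && (N < t)))%N = 0%N.
  by apply: big1 => t _; rewrite ltnNge -ltnS ltn_ord andbF.
rewrite big_mkcond big_ord_recr /= none_above_N -big_mkcond /=.
under eq_bigr => b _ do rewrite above_N.
rewrite big_ord_recr /=; case: (f N) => /=.
  rewrite addn1 qintSl -IHN mulr_sumr addrC; congr (_ + _).
  by apply: eq_bigr => b _; rewrite addn1 exprS.
by rewrite addr0 addn0 -IHN; apply: eq_bigr => b _; rewrite addn0.
Qed.

Lemma sum_last_partner M n (b : 'I_M.+1) :
  \sum_(p : {ffun 'I_M.+1 -> 'I_M.+1} | involution_fix n p && (p ord_max == b))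
     ('X^(crossings p) : {poly int}) =
  \sum_(q : {ffun 'I_M -> 'I_M} | [&& (b == M :> nat) || (natfun q b == b),
         [forall x, q (q x) == x] & #|[set x | q x == x]| + (b == M :> nat) == n + (b < M)]%N)
     'X^(crossings q + fixed_above M (natfun q) b).
Proof.
rewrite (reindex_onto (join_last b) (@cut_last M)) => [|p /andP [/andP [pK _] /eqP <-]];
  last exact: cut_lastK.
apply: eq_big => [q|q /andP [_]]; last by rewrite cut_join_last => /crossings_join_last ->.
rewrite join_last_max eqxx andbT cut_join_last andbC.
by case: (boolP (_ || _)) => //= q_fix_b; rewrite involution_fix_join_last.
Qed.

Definition crossing_poly N n : {poly int} :=
  \sum_(p : {ffun 'I_N -> 'I_N} | involution_fix n p) 'X^(crossings p).

Lemma sum_partner_max M n :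
  \sum_(p : {ffun 'I_M.+1 -> 'I_M.+1} | involution_fix n p && (p ord_max == ord_max))
     'X^(crossings p) =
  if (0 < n)%N then crossing_poly M n.-1 else 0.
Proof.
rewrite sum_last_partner /= eqxx ltnn.
have above_M q : fixed_above M (natfun q) M = 0%N.
  by apply: big1 => t _; rewrite ltnNge ltnW ?andbF.
under eq_bigr => q _ do rewrite above_M addn0.
case: n => [|n] /=; first by apply: big_pred0 => q; rewrite addn1 andbF.
by apply: eq_bigl => q; rewrite addn1 addn0 eqSS.
Qed.

Lemma sum_partner_lt M n (b : 'I_M) :
  \sum_(p : {ffun 'I_M.+1 -> 'I_M.+1} |
         involution_fix n p && (p ord_max == widen_ord (leqnSn M) b))
     ('X^(crossings p) : {poly int}) =
  \sum_(q : {ffun 'I_M -> 'I_M} | involution_fix n.+1 q)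
     (if natfun q b == b then 'X^(crossings q + fixed_above M (natfun q) b)
      else 0 : {poly int}).
Proof.
rewrite sum_last_partner /= (ltn_eqF (ltn_ord b)) (ltn_ord b) big_mkcond [RHS]big_mkcond.
apply: eq_bigr => q _; rewrite /involution_fix addn0 addn1.
by case: (natfun q b == b); rewrite /= ?if_same.
Qed.

Lemma crossing_polyS M n :
  crossing_poly M.+1 n =
  (if (0 < n)%N then crossing_poly M n.-1 else 0) + qint n.+1 * crossing_poly M n.+1.
Proof.
rewrite {1}/crossing_poly.
rewrite (partition_big (fun p : {ffun 'I_M.+1 -> 'I_M.+1} => p ord_max) xpredT) //=.
rewrite big_ord_recr /= addrC sum_partner_max; congr (_ + _).
under eq_bigr => b _ do rewrite sum_partner_lt.
rewrite exchange_big mulr_sumr; apply: eq_bigr => q /andP [_ /eqP card_q].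
rewrite -big_mkcond /=.
under eq_bigr => b _ do rewrite exprD.
rewrite -mulr_sumr mulrC; congr (_ * _).
by rewrite (sum_X_count_above (fun t => natfun q t == t)) -card_q card_fixpts.
Qed.

Lemma sum_card_level_X (R : nzRingType) (T : finType) (P : pred T) (w : T -> nat) K :
  (forall x, w x < K)%N ->
  \sum_(c < K) (#|[set x | P x & w x == c]|)%:R *: ('X^c : {poly R}) =
  \sum_(x | P x) 'X^(w x).
Proof.
move=> w_lt; under eq_bigr => c _.
  rewrite -sum1_card natr_sum big_mkcond scaler_suml /=.
  over.
rewrite exchange_big [RHS]big_mkcond; apply: eq_bigr => x _ /=.
rewrite (bigD1 (Ordinal (w_lt x))) //= big1 => [|c ne_cx]; rewrite !inE.
  by rewrite eqxx andbT; case: (P x); rewrite ?scale1r ?scale0r addr0.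
rewrite (_ : w x == c = false) ?andbF ?scale0r //.
by apply: contraNF ne_cx => /eqP eq_wc; apply/eqP/ord_inj; rewrite /= eq_wc.
Qed.

Lemma crossings_le N (p : {ffun 'I_N -> 'I_N}) : (crossings p <= 2 * N ^ 2)%N.
Proof.
rewrite /crossings mul2n -addnn.
by apply: leq_add; apply: leq_trans (max_card _) _; rewrite card_prod card_ord.
Qed.

Lemma T_crossing_poly f n : T f n = crossing_poly (2 * f + n) n.
Proof. by rewrite /T /Ncount sum_card_level_X // => p; apply: crossings_le. Qed.

Lemma crossing_poly00 : crossing_poly 0 0 = 1.
Proof.
rewrite /crossing_poly (big_pred1 [ffun x => x]) => [|p].
  by rewrite crossingsE /free_crossn /teth_crossn !big_ord0 expr0.
rewrite /= (_ : p == _); last by apply/eqP/ffunP => -[].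
by rewrite /involution_fix card_fixpts big_ord0 andbT; apply/forallP => -[].
Qed.

Lemma crossing_poly_gt N n : (N < n)%N -> crossing_poly N n = 0.
Proof.
move=> lt_Nn; apply: big_pred0 => p; rewrite /involution_fix.
case: eqP => [card_p|]; last by rewrite andbF.
by have := max_card [set x | p x == x]; rewrite card_p card_ord leqNgt lt_Nn.
Qed.

Theorem lemma2p4 :
  T 0 0 = 1 /\
  (forall f n : nat, (f, n) != (0%N, 0%N) ->
     T f n = (if (0 < n)%N then T f n.-1 else 0)
             + (if (0 < f)%N then qint n.+1 * T f.-1 n.+1 else 0)).
Proof.
split=> [|f n nz_fn]; first by rewrite T_crossing_poly crossing_poly00.
have [M eM] : exists M, (2 * f + n)%N = M.+1.
  by exists (2 * f + n).-1; move: nz_fn; case: f; case: n => //= *; lia.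
rewrite !T_crossing_poly eM crossing_polyS; congr (_ + _).
  by case: n eM {nz_fn} => [|n] //= eM; congr crossing_poly; lia.
case: f eM {nz_fn} => [|f] eM /=; last by congr (_ * crossing_poly _ _); lia.
by rewrite crossing_poly_gt ?mulr0 //; lia.
Qed.
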